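(* Let $\Phi\colon\mathcal{M}(2;\mathbb{C})\dashrightarrow\mathcal{M}(2;\mathbb{C})$ be a rational map compatible with conjugation. Then $\mathcal{D}$ is invariant by $\Phi$, i.e. $\Phi(\mathcal{D}\setminus\mathrm{Ind}\,\Phi)\subset\mathcal{D}$.
   Context: $\mathcal{D}$ is the set of diagonal $2\times2$ complex matrices, $\mathrm{Ind}\,\Phi$ the indeterminacy locus of $\Phi$. $\Phi$ is compatible with conjugation if $\mathrm{A}\Phi(\mathrm{M})\mathrm{A}^{-1}=\Phi(\mathrm{A}\mathrm{M}\mathrm{A}^{-1})$ for all $\mathrm{A}\in\mathrm{GL}(2;\mathbb{C})$ whenever $\mathrm{M}$ and $\mathrm{A}\mathrm{M}\mathrm{A}^{-1}$ are in $\mathcal{M}(2;\mathbb{C})\setminus\mathrm{Ind}\,\Phi$. *)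

From mathcomp Require Import all_boot all_algebra.
From mathcomp Require Import reals complex.
From mathcomp Require Import mpoly.
From Stdlib Require Import ClassicalEpsilon.

Set Implicit Arguments.
Unset Strict Implicit.
Unset Printing Implicit Defensive.

Import GRing.Theory.
Local Open Scope ring_scope.

Section RationalMaps.
Variable R : realType.

Definition Cplx : Type := (R[i])%C.

(* Polynomial functions on M(2;C) ~ C^4 (coordinates = the 4 entries). *)
Definition polyM2 := {mpoly Cplx[4]}.

Definition ratfunM2 := {fraction polyM2}.

Definition ratmapM2 := 'M[ratfunM2]_2.

Definition coordsM2 (M : 'M[Cplx]_2) : 'I_4 -> Cplx := fun k => mxvec M 0 k.

Definition regular_at (f : ratfunM2) (x : 'I_4 -> Cplx) : Prop :=
  exists P Q : polyM2, Q.@[x] != 0 /\ f = tofrac P / tofrac Q.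

Definition in_Ind (Phi : ratmapM2) (M : 'M[Cplx]_2) : Prop :=
  exists i j, ~ regular_at (Phi i j) (coordsM2 M).

(* Value of a rational function at a point where it is regular (well defined
   independently of the chosen representation P/Q); arbitrary elsewhere. *)
Definition ratfun_eval (f : ratfunM2) (x : 'I_4 -> Cplx) : Cplx :=
  epsilon (inhabits 0) (fun v => exists P Q : polyM2,
     [/\ Q.@[x] != 0, f = tofrac P / tofrac Q & v = P.@[x] / Q.@[x]]).

Definition ratmap_eval (Phi : ratmapM2) (M : 'M[Cplx]_2) : 'M[Cplx]_2 :=
  \matrix_(i, j) ratfun_eval (Phi i j) (coordsM2 M).

Definition compatible_with_conjugation (Phi : ratmapM2) : Prop :=
  forall (A M : 'M[Cplx]_2), A \in unitmx ->
    ~ in_Ind Phi M -> ~ in_Ind Phi (A *m M *m invmx A) ->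
    A *m ratmap_eval Phi M *m invmx A = ratmap_eval Phi (A *m M *m invmx A).

End RationalMaps.

(* Conjugation by S = diag(1, -1) fixes every diagonal matrix and negates the
   off-diagonal entries of any matrix.  Applying compatibility with A = S to a
   diagonal M gives S Phi(M) S^-1 = Phi(M), so the off-diagonal entries of
   Phi(M) equal their opposites and vanish since 2 <> 0 in C. *)

From mathcomp Require Import all_boot all_algebra.
From mathcomp Require Import reals complex.
From mathcomp Require Import mpoly.

Local Open Scope ring_scope.
Import GRing.Theory Num.Theory.

Section SignMatrix.
Variable F : comUnitRingType.

Definition signmx : 'M[F]_2 := diag_mx (\row_i (-1) ^+ i).

Lemma signmx_conjE (X : 'M[F]_2) i j :
  (signmx *m X *m signmx) i j = (-1) ^+ i * X i j * (-1) ^+ j.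
Proof. by rewrite mul_mx_diag mul_diag_mx !mxE. Qed.

Lemma sign_offdiag (i j : 'I_2) : i != j -> (-1) ^+ i * (-1) ^+ j = -1 :> F.
Proof.
by case: i => [[|[|]]] //= Hi; case: j => [[|[|]]] //= Hj _;
  rewrite ?expr0 ?expr1 ?mul1r ?mulr1.
Qed.

Lemma signmx_sqr : signmx *m signmx = 1%:M.
Proof.
apply/matrixP => i j; rewrite -[X in X *m _]mulmx1 signmx_conjE !mxE.
case: eqP => [<-|_]; last by rewrite mulr0 mul0r.
by rewrite mulr1 -exprMn mulrNN mulr1 expr1n.
Qed.

Lemma signmx_unit : signmx \in unitmx.
Proof. by case: (mulmx1_unit signmx_sqr). Qed.

Lemma invmx_signmx : invmx signmx = signmx.
Proof.
by rewrite -[invmx _]mulmx1 -signmx_sqr mulmxA mulVmx ?signmx_unit // mul1mx.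
Qed.

Lemma signmx_conj_diag (M : 'M[F]_2) : is_diag_mx M -> signmx *m M *m signmx = M.
Proof.
move=> /is_diag_mxP diagM; apply/matrixP => i j; rewrite signmx_conjE.
have [<-|ij] := eqVneq i j; last by rewrite diagM // mulr0 mul0r.
by rewrite mulrC mulrA -exprMn mulrNN mulr1 expr1n mul1r.
Qed.

Lemma signmx_conj_offdiag (X : 'M[F]_2) i j :
  i != j -> (signmx *m X *m signmx) i j = - X i j.
Proof.
by move=> ij; rewrite signmx_conjE mulrC mulrA sign_offdiag ?mulN1r // eq_sym.
Qed.

End SignMatrix.

Lemma signmx_fixed_diag (F : idomainType) (X : 'M[F]_2) :
  2%:R != 0 :> F -> signmx F *m X *m signmx F = X -> is_diag_mx X.
Proof.
move=> two_neq0 fixX; apply/is_diag_mxP => i j ij.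
have /eqP : X i j * 2%:R = 0.
  by rewrite mulr_natr mulr2n -{1}fixX signmx_conj_offdiag // addNr.
by rewrite mulf_eq0 (negPf two_neq0) orbF => /eqP.
Qed.

Theorem lemma2p1 (R : realType) (Phi : ratmapM2 R) :
  compatible_with_conjugation Phi ->
  forall M : 'M[Cplx R]_2, is_diag_mx M -> ~ in_Ind Phi M ->
    is_diag_mx (ratmap_eval Phi M).
Proof.
move=> compatPhi M diagM defM.
have two_neq0 : 2%:R != 0 :> Cplx R by rewrite pnatr_eq0.
have := compatPhi (signmx _) M (signmx_unit _) defM.
rewrite invmx_signmx signmx_conj_diag // => /(_ defM).
exact: (@signmx_fixed_diag (Cplx R) _ two_neq0).
Qed.
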